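(* Let $n\ge4$ be even, $p\ge n+1$ an integer, $c_1$ a positive integer, $a_k=pc_k$, $c_{k+1}=p^2c_k$, and let $T$, $I^{(k)}_i$ and $\lambda_i$ be as in the context. Then for every odd $i$ with $3\le i\le n-1$, every $k\ge1$ and every integer $j$ with $1\le j\le n/2-1$ and $j\ne\frac{i-1}{2}$, $$\lambda_i(I^{(k)}_{2j})>\lambda_i(I^{(k)}_{2j+1}).$$
   Context: $\pi$ is the permutation of $\{1,\dots,n\}$ with top row $1,2,\dots,n$ and bottom row $n,3,2,5,4,\dots,n-1,n-2,1$. Right Rauzy induction: step ''0'' when the rightmost domain (top) interval is longer, ''1'' when the rightmost image (bottom) interval is longer. For $a,c>0$, $\dot\gamma_{m,a}=1^{n-1-m}0^a10^2$, $\gamma_{a,c}=0\,\dot\gamma_{n-2,a}\cdots\dot\gamma_{2,a}\,1^{c(n-1)}$; its transition matrix $\Theta_{a,c}$ (old lengths $=\Theta_{a,c}\cdot$new lengths) has row $1=(1,c,\dots,c)$, row $n=(1,c+1,\dots,c+1)$, and for $1\le i\le(n-2)/2$: row $2i$ has $0$ in column 1, $2$ in columns $2i,2i+1$, $1$ in the other columns among $2,\dots,n$; row $2i+1$ has $a$ in column $2i$, $a+1$ in column $2i+1$, $0$ elsewhere. $\Theta_k=\Theta_{a_k,c_k}$. $T$ is an IET of $[0,1)$ with permutation $\pi$ whose right Rauzy induction path is $\gamma_{a_1,c_1}\gamma_{a_2,c_2}\cdots$; $I^{(k)}$ is the interval on which the induced map lives after the first $k$ blocks and $I^{(k)}_1,\dots,I^{(k)}_n$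 its exchanged subintervals; lengths satisfy $\ell^{(k-1)}=\Theta_k\ell^{(k)}$. For $v\ge0$, $|v|$ is the sum of entries and $\overline v=v/|v|$. $\lambda_i$ denotes the $T$-invariant Borel probability measure such that for every $k\ge0$, $(\lambda_i(I^{(k)}_t))_t$ is a positive multiple of $\lim_{m\to\infty}\overline{\Theta_{k+1}\cdots\Theta_me_i}$. *)

From HB Require Import structures.
From mathcomp Require Import all_boot all_order all_algebra.
From mathcomp Require Import all_classical all_reals all_analysis.
Import Order.TTheory GRing.Theory Num.Theory.
Import numFieldNormedType.Exports.

Set Implicit Arguments.
Unset Strict Implicit.
Unset Printing Implicit Defensive.

Local Open Scope classical_set_scope.
Local Open Scope ring_scope.

(* Letters (interval labels) are the natural numbers 1..n.
   A (labelled) IET state is (top row, bottom row, lengths). *)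
Definition iet_state (R : realType) := (seq nat * seq nat * (nat -> R))%type.

(* The permutation pi: top row 1,...,n ; bottom row n,3,2,5,4,...,n-1,n-2,1. *)
Definition pi_top (n : nat) : seq nat := iota 1 n.
Definition pi_bot (n : nat) : seq nat :=
  n :: flatten [seq [:: (2 * q).+1; 2 * q] | q <- iota 1 (n./2 - 1)] ++ [:: 1%N].

(* Words in {0,1}: false = "0", true = "1". *)
Definition gdot (n m a : nat) : seq bool :=
  nseq (n - 1 - m) true ++ nseq a false ++ [:: true; false; false].

Definition gamma (n a c : nat) : seq bool :=
  false :: flatten [seq gdot n (n - 2 * q) a | q <- iota 1 (n./2 - 1)]
        ++ nseq (c * (n - 1)) true.

Definition insert_after (x y : nat) (s : seq nat) : seq nat :=
  take (index x s).+1 s ++ y :: drop (index x s).+1 s.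

Definition drop_last (s : seq nat) : seq nat := take (size s).-1 s.

(* One step of right Rauzy induction, required to be of type b
   (b = false: "0", the last top interval is strictly longer;
    b = true : "1", the last bottom interval is strictly longer). *)
Definition rauzy_step (R : realType) (b : bool) (st : iet_state R)
  : option (iet_state R) :=
  let: (top, bot, len) := st in
  let al := last 0%N top in
  let be := last 0%N bot in
  if ~~ b then
    (if len be < len al then
       Some (top, insert_after al be (drop_last bot),
             fun u => if u == al then len al - len be else len u)
     else None)
  else
    (if len al < len be then
       Some (insert_after be al (drop_last top), bot,
             fun u => if u == be then len be - len al else len u)
     else None).

Fixpoint rauzy_run (R : realType) (w : seq bool) (st : iet_state R)
  : option (iet_state R) :=
  match w with
  | [::] => Some st
  | b :: w' => obind (rauzy_run w') (rauzy_step b st)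
  end.

Definition lpos (R : realType) (s : seq nat) (len : nat -> R) (t : nat) : R :=
  \sum_(u <- take (index t s) s) len u.

Definition subint (R : realType) (st : iet_state R) (t : nat) : set R :=
  let: (top, _, len) := st in
  [set x | lpos top len t <= x /\ x < lpos top len t + len t].

(* The interval exchange map of a state, extended by the identity outside
   the union of the intervals. *)
Definition iet_map (R : realType) (st : iet_state R) (x : R) : R :=
  let: (top, bot, len) := st in
  let P := fun u => (lpos top len u <= x) && (x < lpos top len u + len u) in
  let k := find P top in
  if (k < size top)%N then
    let t := nth 0%N top k in x - lpos top len t + lpos bot len t
  else x.

(* The transition matrix Theta_{a,c} (rows/columns indexed by 1..n). *)
Definition Theta (R : realType) (n a c : nat) (r s : nat) : R :=
  if r == 1%N then (if s == 1%N then 1 else c%:R)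
  else if r == n then (if s == 1%N then 1 else c.+1%:R)
  else if ~~ odd r then
    (if s == 1%N then 0 else if (s == r) || (s == r.+1) then 2 else 1)
  else (if s == r.-1 then a%:R else if s == r then a.+1%:R else 0).

Definition mulv (R : realType) (n : nat) (M : nat -> nat -> R) (v : nat -> R)
  : nat -> R := fun r => \sum_(1 <= s < n.+1) M r s * v s.

(* thprod n th k d v = th (k+1) * th (k+2) * ... * th (k+d) * v *)
Fixpoint thprod (R : realType) (n : nat) (th : nat -> nat -> nat -> R)
  (k d : nat) (v : nat -> R) : nat -> R :=
  match d with
  | 0%N => v
  | d'.+1 => mulv n (th k.+1) (thprod n th k.+1 d' v)
  end.

Definition evec (R : realType) (i : nat) : nat -> R :=
  fun s => if s == i then 1 else 0.

Definition vsum (R : realType) (n : nat) (v : nat -> R) : R :=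
  \sum_(1 <= s < n.+1) v s.
Definition vnorm (R : realType) (n : nat) (v : nat -> R) : nat -> R :=
  fun s => v s / vsum n v.

From HB Require Import structures.
From mathcomp Require Import all_boot all_order all_algebra.
From mathcomp Require Import all_classical all_reals all_analysis.
From mathcomp Require Import ring lra zify.
Import Order.TTheory GRing.Theory Num.Theory.
Import numFieldNormedType.Exports.
Local Open Scope classical_set_scope.
Local Open Scope ring_scope.

(* Write n = 2h + 2 and X(x) = x_2 + ... + x_n.  The rows of Theta_{a,c} read
     (Theta x)_1 = x_1 + c X,        (Theta x)_n = x_1 + (c + 1) X,
     (Theta x)_2l = X + x_2l + x_2l+1,  (Theta x)_2l+1 = a x_2l + (a + 1) x_2l+1.
   Call x admissible (for j0 and a weight A) when x >= 0, X > 0, x_1 <= X,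
   2 x_n <= X, and every pair (x_2l, x_2l+1) with l <> j0 has mass at most 4X/A.
   The basis vector e_(2 j0 + 1) is admissible for every A, and Theta_{a,c} maps
   A-admissible vectors to a-admissible ones when A >= 4a and a >= 2c + 3: the
   tail of Theta x is at least (a + 1) X / 2, while for l <> j0 the pair of
   Theta x has mass at most X + (a + 2) 4X/A.  Since a_(k+1) = p^2 a_k >= 8 a_k,
   all Theta_(k+1) ... Theta_m e_i are admissible, and for j <> j0 entry 2j of
   Theta_(k+1) x exceeds entry 2j+1 by at least X/2 while its total mass is at
   most (2c + h + a + 5) X.  So the normalised differences are bounded below
   uniformly in m, hence so is their limit, which is a positive multiple of
   lambda_i(I_2j) - lambda_i(I_2j+1). *)

Lemma sum_nat_delta (V : nmodType) (F : nat -> V) m N r : (m <= r < N)%N ->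
  \sum_(m <= s < N) (if s == r then F s else 0) = F r.
Proof. by move=> r_in; rewrite -big_mkcond big_nat1_eq r_in. Qed.

Definition vtail {R : realType} (n : nat) (x : nat -> R) : R :=
  \sum_(2 <= s < n.+1) x s.

Lemma vtail_ge0 {R : realType} {n : nat} {x : nat -> R} :
  (forall s, (1 <= s <= n)%N -> 0 <= x s) -> 0 <= vtail n x.
Proof.
move=> x_ge0; rewrite /vtail big_nat_cond sumr_ge0 // => s /andP[/andP[s_gt1 s_le] _].
by rewrite x_ge0 // ltnW.
Qed.

Section ThetaRows.
Variables (R : realType) (n a c : nat).
Implicit Types x : nat -> R.
Local Notation Th := (Theta R n a c).

Lemma Theta_ge0 r s : 0 <= Th r s.
Proof. by rewrite /Theta; repeat case: ifP => _; rewrite ?ler01 ?ler0n. Qed.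

Lemma mulv_Theta_ge0 x r :
  (forall s, (1 <= s <= n)%N -> 0 <= x s) -> 0 <= mulv n Th x r.
Proof.
move=> x_ge0; rewrite /mulv big_nat_cond.
by apply: sumr_ge0 => s /andP[/andP[s_ge1 s_le] _]; rewrite mulr_ge0 ?Theta_ge0 ?x_ge0 ?s_ge1.
Qed.

Lemma mulv_Theta_first x : (1 < n)%N -> mulv n Th x 1 = x 1%N + c%:R * vtail n x.
Proof.
move=> n_gt1; rewrite /mulv big_ltn 1?ltnW // /Theta eqxx mul1r /vtail mulr_sumr.
congr (_ + _); apply: eq_big_nat => s /andP[s_gt1 _].
by rewrite (gtn_eqF s_gt1).
Qed.

Lemma mulv_Theta_last x : (1 < n)%N -> mulv n Th x n = x 1%N + c.+1%:R * vtail n x.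
Proof.
move=> n_gt1; rewrite /mulv big_ltn 1?ltnW //.
rewrite /Theta eqxx (gtn_eqF n_gt1) eqxx mul1r /vtail mulr_sumr.
congr (_ + _); apply: eq_big_nat => s /andP[s_gt1 _].
by rewrite (gtn_eqF s_gt1).
Qed.

Lemma mulv_Theta_even x l : (0 < l)%N -> (2 * l < n)%N ->
  mulv n Th x (2 * l) = vtail n x + x (2 * l)%N + x (2 * l).+1.
Proof.
move=> l_gt0 l_lt; rewrite /mulv big_ltn; last lia.
have [r_ne1 r_nen] : (2 * l != 1)%N /\ (2 * l != n)%N by split; apply/eqP; lia.
have r_even : odd (2 * l) = false by rewrite mul2n odd_double.
rewrite {1}/Theta (negbTE r_ne1) (negbTE r_nen) r_even eqxx mul0r add0r.
rewrite (eq_big_nat _ _ (F2 := fun s => x s + (if s == (2 * l)%N then x s else 0)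
   + (if s == (2 * l).+1%N then x s else 0))); last first.
  move=> s /andP[s_gt1 _]; rewrite /Theta (negbTE r_ne1) (negbTE r_nen) r_even.
  rewrite (gtn_eqF s_gt1); case: eqP => [->|_]; first by rewrite (ltn_eqF (ltnSn _)) /=; lra.
  by case: eqP => _ /=; lra.
by rewrite !big_split /= !sum_nat_delta //; lia.
Qed.

Lemma mulv_Theta_odd x l : (0 < l)%N -> ((2 * l).+1 < n)%N ->
  mulv n Th x (2 * l).+1 = a%:R * x (2 * l)%N + a.+1%:R * x (2 * l).+1.
Proof.
move=> l_gt0 l_lt; have [r_ne1 r_nen] : ((2 * l).+1 != 1 /\ (2 * l).+1 != n)%N.
  by split; apply/eqP; lia.
have r_odd : odd (2 * l).+1 by rewrite /= mul2n odd_double.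
rewrite /mulv (eq_big_nat _ _ (F2 := fun s => (if s == (2 * l)%N then a%:R * x s else 0)
   + (if s == (2 * l).+1%N then a.+1%:R * x s else 0))); last first.
  move=> s _; rewrite /Theta (negbTE r_ne1) (negbTE r_nen) r_odd /=.
  case: eqP => [->|_]; first by rewrite (ltn_eqF (ltnSn _)) /=; lra.
  by case: eqP => _ /=; lra.
by rewrite big_split /= !sum_nat_delta //; lia.
Qed.

End ThetaRows.

Definition vpairs {R : realType} (h : nat) (x : nat -> R) : R :=
  \sum_(1 <= l < h.+1) (x (2 * l)%N + x (2 * l).+1).

Lemma vtail_pairs (R : realType) (h : nat) (x : nat -> R) :
  vtail (2 * h + 2) x = x (2 * h + 2)%N + vpairs h x.
Proof.
rewrite /vpairs; elim: h => [|h IH]; first by rewrite /vtail big_nat1 big_geq // addr0.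
rewrite /vtail (_ : (2 * h.+1 + 2 = (2 * h + 2).+2)%N); last lia.
rewrite big_nat_recr /=; last lia.
rewrite big_nat_recr /=; last lia.
rewrite -/(vtail (2 * h + 2) x) IH [in RHS]big_nat_recr //=.
rewrite (_ : (2 * h.+1 = 2 * h + 2)%N); last lia.
lra.
Qed.

Section AdmissibleCone.
Local Set Implicit Arguments.
Local Unset Strict Implicit.
Variables (R : realType) (h : nat).
Local Notation n := (2 * h + 2)%N.
Implicit Types x : nat -> R.

Lemma mulv_Theta_pair a c x l : (1 <= l <= h)%N ->
  mulv n (Theta R n a c) x (2 * l) = vtail n x + x (2 * l)%N + x (2 * l).+1 /\
  mulv n (Theta R n a c) x (2 * l).+1 = a%:R * x (2 * l)%N + (a%:R + 1) * x (2 * l).+1.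
Proof.
move=> /andP[l_gt0 l_le]; rewrite natr1 mulv_Theta_even ?mulv_Theta_odd //; lia.
Qed.

Lemma pair_ge0 x l : (forall s, (1 <= s <= n)%N -> 0 <= x s) -> (1 <= l <= h)%N ->
  0 <= x (2 * l)%N /\ 0 <= x (2 * l).+1.
Proof. by move=> x_ge0 l_in; split; apply: x_ge0; lia. Qed.

Lemma vtail_mulv_Theta a c x :
  vtail n (mulv n (Theta R n a c) x) = mulv n (Theta R n a c) x n +
  \sum_(1 <= l < h.+1) (vtail n x + (a%:R + 1) * (x (2 * l)%N + x (2 * l).+1) + x (2 * l).+1).
Proof.
rewrite vtail_pairs /vpairs; congr (_ + _); apply: eq_big_nat => l l_in.
by have [-> ->] := mulv_Theta_pair a c x l_in; lra.
Qed.

Lemma vtail_mulv_Theta_bounds a c x : (forall s, (1 <= s <= n)%N -> 0 <= x s) ->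
  (a%:R + 1) * vpairs h x
    <= vtail n (mulv n (Theta R n a c) x) - mulv n (Theta R n a c) x n
    <= h%:R * vtail n x + (a%:R + 2) * vpairs h x.
Proof.
move=> x_ge0.
have -> : h%:R * vtail n x = \sum_(1 <= l < h.+1) vtail n x.
  by rewrite sumr_const_nat subn1 mulr_natl.
rewrite vtail_mulv_Theta addrAC subrr add0r /vpairs !mulr_sumr -big_split /=.
have X_ge0 := vtail_ge0 x_ge0.
by apply/andP; split; apply: ler_sum_nat => l l_in; have := pair_ge0 x_ge0 l_in; lra.
Qed.

Record admissible (j0 : nat) (A : R) x : Prop := Admissible {
  admissible_ge0 : forall s, (1 <= s <= n)%N -> 0 <= x s;
  admissible_tail_gt0 : 0 < vtail n x;
  admissible_first : x 1%N <= vtail n x;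
  admissible_last : 2 * x n <= vtail n x;
  admissible_pair : forall l, (1 <= l <= h)%N -> l != j0 ->
    A * (x (2 * l)%N + x (2 * l).+1) <= 4 * vtail n x }.

Lemma admissible_evec j0 A : (1 <= j0 <= h)%N -> admissible j0 A (evec R (2 * j0).+1).
Proof.
move=> j0_in; have tail1 : vtail n (evec R (2 * j0).+1) = 1.
  by rewrite /vtail /evec sum_nat_delta //; lia.
have evec0 s : s != (2 * j0).+1 -> evec R (2 * j0).+1 s = 0 by rewrite /evec => /negbTE ->.
split; rewrite ?tail1 ?ltr01 //.
- by move=> s _; rewrite /evec; case: eqP.
- by rewrite evec0 ?ler01 //; apply/eqP; lia.
- by rewrite evec0 ?mulr0 ?ler01 //; apply/eqP; lia.
- move=> l l_in l_ne; rewrite !evec0 ?addr0 ?mulr0; first lra.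
  + by apply/eqP => e; move/eqP: l_ne; apply; lia.
  + by apply/eqP; lia.
Qed.

Lemma admissible_vpairs j0 A x : admissible j0 A x ->
  vtail n x <= 2 * vpairs h x /\ vpairs h x <= vtail n x.
Proof.
move=> [x_ge0 _ _ xn_le _]; rewrite vtail_pairs in xn_le *.
have : 0 <= x n by apply: x_ge0; lia.
lra.
Qed.

Lemma admissible_mulv_Theta j0 A a c x : (2 * c + 3 <= a)%N -> 4 * a%:R <= A ->
  admissible j0 A x -> admissible j0 a%:R (mulv n (Theta R n a c) x).
Proof.
move=> a_ge A_ge x_adm; have [X_le_2P P_le_X] := admissible_vpairs x_adm.
case: x_adm => x_ge0 X_gt0 x1_le _ pair_le.
set y := mulv n _ x; set X := vtail n x in X_gt0 x1_le pair_le X_le_2P P_le_X *.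
have n_gt1 : (1 < n)%N by lia.
have y1 : y 1%N = x 1%N + c%:R * X by rewrite /y mulv_Theta_first.
have yn : y n = x 1%N + (c%:R + 1) * X by rewrite /y mulv_Theta_last // -[c.+1%:R]natr1.
have /andP[a1P _] := vtail_mulv_Theta_bounds a c x_ge0.
rewrite -/y -/X in a1P.
have x1_ge0 : 0 <= x 1%N by apply: x_ge0; lia.
have cX : 0 <= c%:R * X by rewrite mulr_ge0 ?ler0n ?ltW.
have a_ge0 : 0 <= a%:R :> R := ler0n _ _.
have aX_le : (a%:R + 1) * X <= (a%:R + 1) * (2 * vpairs h x) by rewrite ler_wpM2l //; lra.
have aP_ge0 : 0 <= (a%:R + 1) * vpairs h x by rewrite mulr_ge0 //; lra.
split.
- by move=> s _; apply: mulv_Theta_ge0.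
- by move: a1P; rewrite yn; lra.
- by move: a1P; rewrite y1 yn; lra.
- have cX_le : (2 * c%:R + 4) * X <= (a%:R + 1) * X.
    by rewrite ler_pM2r //; move: a_ge; rewrite -(ler_nat R) natrD natrM; lra.
  by move: a1P; rewrite yn; lra.
move=> l l_in l_ne; have A_pair := pair_le l l_in l_ne.
have [u_ge0 v_ge0] := pair_ge0 x_ge0 l_in.
rewrite /y; have [-> ->] := mulv_Theta_pair a c x l_in; rewrite -/X.
set u := x (2 * l)%N in A_pair u_ge0 *; set v := x (2 * l).+1 in A_pair v_ge0 *.
have a_pair : a%:R * (u + v) <= X.
  have : 4 * a%:R * (u + v) <= A * (u + v) by rewrite ler_wpM2r //; lra.
  lra.
have av_le : a%:R * v <= a%:R * (u + v) by rewrite ler_wpM2l //; lra.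
have : (a%:R + 1) * (a%:R * (u + v)) <= (a%:R + 1) * X by rewrite ler_wpM2l //; lra.
by move: a1P; rewrite yn; lra.
Qed.

Lemma vsum_mulv_Theta_bounds j0 A a c x : admissible j0 A x ->
  vtail n x <= vsum n (mulv n (Theta R n a c) x)
            <= (2 * c + h + a + 5)%:R * vtail n x.
Proof.
move=> x_adm; have [X_le_2P P_le_X] := admissible_vpairs x_adm.
case: x_adm => x_ge0 X_gt0 x1_le _ _.
have /andP[Q_lo Q_hi] := vtail_mulv_Theta_bounds a c x_ge0.
have n_gt1 : (1 < n)%N by lia.
rewrite /vsum big_ltn 1?ltnW // -/(vtail n _) mulv_Theta_first //.
rewrite mulv_Theta_last // -[c.+1%:R]natr1 in Q_lo Q_hi.
set X := vtail n x in X_gt0 x1_le X_le_2P P_le_X Q_lo Q_hi *.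
have x1_ge0 : 0 <= x 1%N by apply: x_ge0; lia.
have cX : 0 <= c%:R * X by rewrite mulr_ge0 ?ler0n ?ltW.
have aP_ge0 : 0 <= (a%:R + 1) * vpairs h x by rewrite mulr_ge0 //; lra.
have aP_le : (a%:R + 2) * vpairs h x <= (a%:R + 2) * X by rewrite ler_wpM2l //; lra.
apply/andP; split; lra.
Qed.

Lemma mulv_Theta_pair_gap j0 A a c x j : admissible j0 A x -> 8 * a%:R <= A ->
  (1 <= j <= h)%N -> j != j0 ->
  vtail n x / 2 <= mulv n (Theta R n a c) x (2 * j) - mulv n (Theta R n a c) x (2 * j).+1.
Proof.
move=> [x_ge0 X_gt0 _ _ pair_le] A_ge j_in j_ne; have := pair_le j j_in j_ne.
have [u_ge0 v_ge0] := pair_ge0 x_ge0 j_in.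
have [-> ->] := mulv_Theta_pair a c x j_in.
set u := x (2 * j)%N in u_ge0 *; set v := x (2 * j).+1 in v_ge0 *.
have : 8 * a%:R * (u + v) <= A * (u + v) by rewrite ler_wpM2r //; lra.
lra.
Qed.

Lemma vnorm_mulv_Theta_gap j0 A a c x j : admissible j0 A x -> 8 * a%:R <= A ->
  (1 <= j <= h)%N -> j != j0 ->
  (2 * (2 * c + h + a + 5)%:R)^-1 <=
  vnorm n (mulv n (Theta R n a c) x) (2 * j) - vnorm n (mulv n (Theta R n a c) x) (2 * j).+1.
Proof.
move=> x_adm A_ge j_in j_ne; set y := mulv n _ x.
have gap := mulv_Theta_pair_gap c x_adm A_ge j_in j_ne.
have /andP[S_lo S_hi] := vsum_mulv_Theta_bounds a c x_adm.
have X_gt0 := admissible_tail_gt0 x_adm.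
set B := (2 * c + h + a + 5)%:R in S_hi *; have B_gt0 : 0 < B by rewrite ltr0n addnS.
rewrite /vnorm -mulrBl ler_pdivlMr -/y; last lra.
apply: le_trans gap; apply: le_trans (ler_wpM2l _ S_hi) _; first by rewrite invr_ge0; lra.
rewrite (_ : (2 * B)^-1 * (B * vtail n x) = vtail n x / 2) //; field; exact: lt0r_neq0.
Qed.

End AdmissibleCone.

Section ThetaProducts.
Variables (R : realType) (h j0 : nat) (a c : nat -> nat).
Local Notation n := (2 * h + 2)%N.
Local Notation theta := (fun q => Theta R n (a q) (c q)).
Hypothesis j0_in : (1 <= j0 <= h)%N.
Hypothesis a_ge : forall q, (1 <= q)%N -> (2 * c q + 3 <= a q)%N.
Hypothesis a_grow : forall q, (1 <= q)%N -> (8 * a q <= a q.+1)%N.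
Local Set Implicit Arguments.
Local Unset Strict Implicit.

Lemma admissible_thprod d k :
  admissible h j0 (a k.+1)%:R (thprod n theta k d (evec R (2 * j0).+1)).
Proof.
elim: d k => [|d IH] k /=; first exact: admissible_evec.
apply: admissible_mulv_Theta (IH k.+1); first exact: a_ge.
by rewrite -natrM ler_nat; have := a_grow k.+1; lia.
Qed.

Lemma vnorm_thprod_gap k j : (1 <= j <= h)%N -> j != j0 -> forall m,
  let w := thprod n theta k m.+1 (evec R (2 * j0).+1) in
  (2 * (2 * c k.+1 + h + a k.+1 + 5)%:R)^-1 <= vnorm n w (2 * j) - vnorm n w (2 * j).+1.
Proof.
move=> j_in j_ne m /=; apply: vnorm_mulv_Theta_gap (admissible_thprod m k.+1) _ j_in j_ne.
by rewrite -natrM ler_nat; exact: a_grow.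
Qed.

End ThetaProducts.

Lemma Theta_params_growth {p c1 : nat} {a c : nat -> nat} :
  (5 <= p)%N -> (0 < c1)%N -> c 1%N = c1 ->
  (forall k, (1 <= k)%N -> c k.+1 = (p ^ 2 * c k)%N) ->
  (forall k, (1 <= k)%N -> a k = (p * c k)%N) ->
  (forall q, (1 <= q)%N -> 2 * c q + 3 <= a q)%N /\
  (forall q, (1 <= q)%N -> 8 * a q <= a q.+1)%N.
Proof.
move=> p_ge5 c1_gt0 c_1 c_S a_def.
have c_gt0 q : (1 <= q)%N -> (0 < c q)%N.
  elim: q => [//|[|q] IH] _; first by rewrite c_1.
  by rewrite c_S // muln_gt0 expn_gt0 IH // andbT; lia.
by split=> q q_gt0; have := c_gt0 q q_gt0; rewrite !a_def ?c_S //; nia.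
Qed.
Theorem mainTheorem9 (R : realType) (n p c1 : nat) (a c : nat -> nat)
  (len0 : nat -> R) (S : nat -> iet_state R) :
  (4 <= n)%N -> ~~ odd n -> (n.+1 <= p)%N -> (0 < c1)%N ->
  c 1%N = c1 ->
  (forall k, (1 <= k)%N -> c k.+1 = (p ^ 2 * c k)%N) ->
  (forall k, (1 <= k)%N -> a k = (p * c k)%N) ->
  (* T: IET of [0,1) with permutation pi and lengths len0 *)
  (forall t, (1 <= t <= n)%N -> 0 < len0 t) ->
  \sum_(1 <= t < n.+1) len0 t = 1 ->
  S 0%N = (pi_top n, pi_bot n, len0) ->
  (* right Rauzy induction path is gamma_{a_1,c_1} gamma_{a_2,c_2} ...;
     S k is the induced IET after the first k blocks *)
  (forall k, rauzy_run (gamma n (a k.+1) (c k.+1)) (S k) = Some (S k.+1)) ->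
  forall i : nat, odd i -> (3 <= i <= n - 1)%N ->
  forall P : probability R R,
  P [set x : R | 0 <= x /\ x < 1] = 1%E ->
  (forall A : set R, measurable A ->
     P (iet_map (S 0%N) @^-1` A) = P A) ->
  (forall k : nat, exists v : nat -> R, exists r : R, 0 < r /\
     (forall t, (1 <= t <= n)%N ->
        (fun m => vnorm n (thprod n (fun q => Theta R n (a q) (c q)) k m
                                 (evec R i)) t) @ \oo --> v t) /\
     (forall t, (1 <= t <= n)%N -> P (subint (S k) t) = (r * v t)%:E)) ->
  forall k j : nat, (1 <= k)%N -> (1 <= j <= n./2 - 1)%N -> j != i./2 ->
  (P (subint (S k) (2 * j)%N) > P (subint (S k) (2 * j).+1))%E.
Proof.
move=> n_ge4 n_even p_gt_n c1_gt0 c_1 c_S a_def _ _ _ _ i i_odd i_in P _ _ lam k j _ j_in j_ne.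
have [h n_eq] : exists h, n = (2 * h + 2)%N.
  by exists (n./2 - 1)%N; move: (odd_double_half n); rewrite (negbTE n_even); lia.
subst n; set j0 := i./2 in j_ne.
have i_eq : i = (2 * j0).+1 by move: (odd_double_half i); rewrite i_odd; lia.
have p_ge5 : (5 <= p)%N by lia.
have [a_ge a_grow] := Theta_params_growth p_ge5 c1_gt0 c_1 c_S a_def.
have j0_in : (1 <= j0 <= h)%N by lia.
have j_le : (1 <= j <= h)%N by lia.
have gap := vnorm_thprod_gap R j0_in a_ge a_grow k j_le j_ne.
have [v [r [r_gt0 [v_lim P_eq]]]] := lam k.
rewrite i_eq in v_lim; rewrite !P_eq ?lte_fin ?ltr_pM2l // -1?subr_gt0; [|lia..].
apply: lt_le_trans (cvgr_to_ge (cvgB (v_lim _ _) (v_lim _ _)) _); last first.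
- exists 1%N => // -[|m] m_ge1; last exact: gap.
  by [].
all: by [rewrite invr_gt0 mulr_gt0 ?ltr0n ?addnS | lia].
Qed.
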